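(* Let $(X,d)$ be a complete metric space, $k\ge2$, $0<\rho<1$, and $\mu:X^k\to X$ a nonexpansive, coordinatewise $\rho$-contractive $k$-mean. Then the barycentric operator $\beta$ of $\mu$ is power convergent, and hence there exists a unique continuous $(k+1)$-mean $\tilde\mu:X^{k+1}\to X$ that $\beta$-extends $\mu$. Furthermore, $\tilde\mu$ is nonexpansive and coordinatewise $\rho$-contractive.
   Context: A $k$-mean is a map $\mu:X^k\to X$ with $\mu(x,\ldots,x)=x$. Nonexpansive: $d(\mu(\mathbf{x}),\mu(\mathbf{y}))\le\max_j d(x_j,y_j)$ for all $\mathbf{x},\mathbf{y}\in X^k$. Coordinatewise $\rho$-contractive: $d(\mu(\mathbf{x}),\mu(\mathbf{y}))\le\rho\,d(x_j,y_j)$ whenever $\mathbf{x},\mathbf{y}$ differ only in coordinate $j$. Barycentric operator: $\beta(\mathbf{x})_j=\mu(x_1,\ldots,x_{j-1},x_{j+1},\ldots,x_{k+1})$ on $X^{k+1}$; power convergent: for each $\mathbf{x}$, $\beta^n(\mathbf{x})\to(x^*,\ldots,x^* )$ for some $x^*$. A $(k+1)$-mean $\nu$ $\beta$-extends $\mu$ if $\beta^n(\mathbf{x})\to(\nu(\mathbf{x}),\ldots,\nu(\mathbf{x}))$ for every $\mathbf{x}$. *)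

From mathcomp Require Import all_boot.
From Stdlib Require Import Reals.
Set Implicit Arguments. Unset Strict Implicit. Unset Printing Implicit Defensive.
Open Scope R_scope.

Section Defs.
Variable X : Type.
Variable d : X -> X -> R.

Definition is_metric : Prop :=
  (forall x y, 0 <= d x y) /\
  (forall x y, d x y = 0 <-> x = y) /\
  (forall x y, d x y = d y x) /\
  (forall x y z, d x z <= d x y + d y z).

Definition seq_converges (u : nat -> X) (l : X) : Prop :=
  forall eps, 0 < eps -> exists N, forall n, (N <= n)%nat -> d (u n) l < eps.

Definition cauchy_seq (u : nat -> X) : Prop :=
  forall eps, 0 < eps -> exists N, forall m n, (N <= m)%nat -> (N <= n)%nat ->
    d (u m) (u n) < eps.

Definition complete : Prop :=
  forall u, cauchy_seq u -> exists l, seq_converges u l.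

Definition dmax (k : nat) (x y : 'I_k -> X) : R :=
  \big[Rmax/0]_(j < k) d (x j) (y j).

Definition is_mean (k : nat) (mu : ('I_k -> X) -> X) : Prop :=
  forall x : X, mu (fun _ => x) = x.

Definition nonexpansive (k : nat) (mu : ('I_k -> X) -> X) : Prop :=
  forall x y : 'I_k -> X, d (mu x) (mu y) <= dmax x y.

Definition coord_contractive (rho : R) (k : nat) (mu : ('I_k -> X) -> X) : Prop :=
  forall (x y : 'I_k -> X) (j : 'I_k),
    (forall i, i != j -> x i = y i) -> d (mu x) (mu y) <= rho * d (x j) (y j).

Definition continuous_mean (k : nat) (mu : ('I_k -> X) -> X) : Prop :=
  forall x eps, 0 < eps -> exists delta, 0 < delta /\
    forall y, dmax x y < delta -> d (mu x) (mu y) < eps.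

(* barycentric operator on X^(k+1): coordinate j is mu applied to x with x_j deleted *)
Definition barycentric (k : nat) (mu : ('I_k -> X) -> X) (x : 'I_k.+1 -> X)
  : 'I_k.+1 -> X :=
  fun j => mu (fun i : 'I_k => x (lift j i)).

Definition tuple_converges (m : nat) (u : nat -> 'I_m -> X) (l : 'I_m -> X) : Prop :=
  forall eps, 0 < eps -> exists N, forall n, (N <= n)%nat -> dmax (u n) l < eps.

Definition power_convergent (k : nat) (mu : ('I_k -> X) -> X) : Prop :=
  forall x : 'I_k.+1 -> X, exists xs : X,
    tuple_converges (fun n => iter n (barycentric mu) x) (fun _ => xs).

Definition beta_extends (k : nat) (mu : ('I_k -> X) -> X) (nu : ('I_k.+1 -> X) -> X)
  : Prop :=
  forall x : 'I_k.+1 -> X,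
    tuple_converges (fun n => iter n (barycentric mu) x) (fun _ => nu x).

End Defs.

From mathcomp Require Import all_boot.
From Stdlib Require Import Reals Lra ClassicalEpsilon FunctionalExtensionality.
Open Scope R_scope.
Set Implicit Arguments. Unset Strict Implicit.

(* The barycentric operator [beta] contracts the largest distance between
   adjacent coordinates by [rho]: [beta x]_m and [beta x]_(m+1) are [mu]
   applied to two k-tuples that differ in a single coordinate, holding [x_(m+1)]
   and [x_m] respectively.  Hence after n steps every coordinate lies within
   [k A rho^n] of the first one, A being the initial adjacent spread.  As [mu]
   is a nonexpansive mean, the first coordinate then moves by at most
   [k A rho^n] per step, so it is Cauchy, and all coordinates converge to its
   limit.  The limit map inherits the mean property, nonexpansiveness and
   coordinatewise contraction from [beta], and it is unique because limits
   are. *)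

Lemma bigRmax_ge m (F : 'I_m -> R) j : F j <= \big[Rmax/0]_(i < m) F i.
Proof.
have : j \in index_enum 'I_m by apply: mem_index_enum.
elim: (index_enum 'I_m) => [//|a s IH]; rewrite in_cons big_cons.
case/orP => [/eqP -> | /IH hs]; first exact: Rmax_l.
exact: Rle_trans hs (Rmax_r _ _).
Qed.

Lemma bigRmax_le m (F : 'I_m -> R) c :
  0 <= c -> (forall j, F j <= c) -> \big[Rmax/0]_(i < m) F i <= c.
Proof. by move=> c0 hF; apply: (big_ind (fun r => r <= c)) => // a b; apply: Rmax_lub. Qed.

Lemma bigRmax_ge0 m (F : 'I_m -> R) :
  (forall j, 0 <= F j) -> 0 <= \big[Rmax/0]_(i < m) F i.
Proof.
move=> hF; apply: (big_ind (fun r => 0 <= r)) => //; first lra.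
by move=> a b ha _; apply: Rle_trans ha (Rmax_l _ _).
Qed.

Lemma pow_lt_eventually r y :
  0 <= r < 1 -> 0 < y -> exists N, forall n, (N <= n)%nat -> r ^ n < y.
Proof.
move=> hr hy; have hr1 : Rabs r < 1 by rewrite Rabs_pos_eq; lra.
have [N HN] := @pow_lt_1_zero r hr1 y hy; exists N => n /ssrnat.leP /HN.
by rewrite Rabs_pos_eq //; apply: pow_le; lra.
Qed.

Section MetricSpace.
Variables (X : Type) (d : X -> X -> R).
Hypothesis hmet : is_metric d.

Lemma dist_ge0 x y : 0 <= d x y. Proof. by case: hmet. Qed.
Lemma dist_xx x : d x x = 0. Proof. by case: hmet => _ [h _]; apply/h. Qed.
Lemma dist_eq0 x y : d x y = 0 -> x = y. Proof. by case: hmet => _ [h _] /h. Qed.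
Lemma dist_sym x y : d x y = d y x. Proof. by case: hmet => _ [_ []]. Qed.
Lemma dist_tri x y z : d x z <= d x y + d y z. Proof. by case: hmet => _ [_ [_ h]]. Qed.

Lemma dmax_ge m (x y : 'I_m -> X) j : d (x j) (y j) <= dmax d x y.
Proof. exact: (bigRmax_ge (fun j => d (x j) (y j))). Qed.

Lemma dmax_le m (x y : 'I_m -> X) c :
  0 <= c -> (forall j, d (x j) (y j) <= c) -> dmax d x y <= c.
Proof. exact: bigRmax_le. Qed.

Lemma dmax_ge0 m (x y : 'I_m -> X) : 0 <= dmax d x y.
Proof. by apply: bigRmax_ge0 => j; apply: dist_ge0. Qed.

Lemma dmax_xx m (x : 'I_m -> X) : dmax d x x = 0.
Proof.
apply: Rle_antisym; last exact: dmax_ge0.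
by apply: dmax_le => [|j]; rewrite ?dist_xx; lra.
Qed.

Lemma tuple_limit_dist_le m (u v : nat -> 'I_m.+1 -> X) a b c N :
  tuple_converges d u (fun _ => a) -> tuple_converges d v (fun _ => b) ->
  (forall n, (N <= n)%nat -> dmax d (u n) (v n) <= c) -> d a b <= c.
Proof.
move=> ha hb huv; apply: le_epsilon => eps he.
have [N1 H1] := ha _ (ltac:(lra) : 0 < eps / 2).
have [N2 H2] := hb _ (ltac:(lra) : 0 < eps / 2).
set n := maxn N (maxn N1 N2).
have h1 := H1 n (leq_trans (leq_maxl _ _) (leq_maxr _ _)).
have h2 := H2 n (leq_trans (leq_maxr _ _) (leq_maxr _ _)).
have h3 := huv n (leq_maxl _ _).
have g1 := dmax_ge (u n) (fun _ => a) ord0.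
have g2 := dmax_ge (v n) (fun _ => b) ord0.
have g3 := dmax_ge (u n) (v n) ord0.
have t1 := dist_tri a (u n ord0) b; have t2 := dist_tri (u n ord0) (v n ord0) b.
rewrite (dist_sym a (u n ord0)) in t1; simpl in g1, g2; lra.
Qed.

Lemma tuple_limit_unique m (u : nat -> 'I_m.+1 -> X) a b :
  tuple_converges d u (fun _ => a) -> tuple_converges d u (fun _ => b) -> a = b.
Proof.
move=> ha hb; apply: dist_eq0; apply: Rle_antisym; last exact: dist_ge0.
by apply: (tuple_limit_dist_le (N := 0) ha hb) => n _; rewrite dmax_xx; lra.
Qed.

(* Multiplied out by [1 - r] so that the bound is a polynomial inequality. *)
Lemma geometric_tail_le r c (v : nat -> X) :
  (forall n, d (v n.+1) (v n) <= c * r ^ n) -> r < 1 ->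
  forall n p, d (v (n + p)%nat) (v n) * (1 - r) <= c * (r ^ n - r ^ (n + p)).
Proof.
move=> hstep hr n; elim=> [|p IH]; first by rewrite addn0 dist_xx; lra.
rewrite addnS -tech_pow_Rmult.
have htri := dist_tri (v (n + p).+1) (v (n + p)%nat) (v n).
have hs := hstep (n + p)%nat.
have : d (v (n + p).+1) (v n) * (1 - r)
    <= (d (v (n + p).+1) (v (n + p)%nat) + d (v (n + p)%nat) (v n)) * (1 - r).
  by apply: Rmult_le_compat_r; lra.
have : d (v (n + p).+1) (v (n + p)%nat) * (1 - r) <= c * r ^ (n + p) * (1 - r).
  by apply: Rmult_le_compat_r; lra.
nra.
Qed.

Lemma cauchy_of_geometric r c (v : nat -> X) :
  0 <= r < 1 -> 0 <= c -> (forall n, d (v n.+1) (v n) <= c * r ^ n) ->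
  cauchy_seq d v.
Proof.
move=> hr c0 hstep eps he.
have hy : 0 < eps * (1 - r) / (2 * (c + 1)) by apply: Rdiv_lt_0_compat; nra.
have [N HN] := pow_lt_eventually hr hy.
have hN q : (N <= q)%nat -> d (v q) (v N) * (1 - r) <= c * r ^ N.
  move=> hq; rewrite -(subnKC hq).
  have := geometric_tail_le hstep (proj2 hr) N (q - N); have := pow_le r (N + (q - N)) (ltac:(lra)); nra.
exists N => m n hm hn.
have hrN := HN N (leqnn N); have hpN := pow_le r N (ltac:(lra)).
have e : eps * (1 - r) / (2 * (c + 1)) * (2 * (c + 1)) = eps * (1 - r) by field; lra.
have hmN := hN m hm; have hnN := hN n hn.
have t := dist_tri (v m) (v N) (v n); rewrite (dist_sym (v N)) in t.
apply: (Rmult_lt_reg_r (1 - r)); first lra.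
have : d (v m) (v n) * (1 - r) <= (d (v m) (v N) + d (v n) (v N)) * (1 - r).
  by apply: Rmult_le_compat_r; lra.
nra.
Qed.

Lemma tuple_converges_of_head m (u : nat -> 'I_m.+1 -> X) l r c :
  0 <= r < 1 -> 0 <= c -> seq_converges d (fun n => u n ord0) l ->
  (forall n j, d (u n j) (u n ord0) <= c * r ^ n) ->
  tuple_converges d u (fun _ => l).
Proof.
move=> hr c0 hl hu eps he.
have [N1 H1] := hl _ (ltac:(lra) : 0 < eps / 2).
have hy : 0 < eps / (2 * (c + 1)) by apply: Rdiv_lt_0_compat; lra.
have [N2 H2] := pow_lt_eventually hr hy.
exists (maxn N1 N2) => n hn.
have h1 := H1 n (leq_trans (leq_maxl _ _) hn).
have h2 := H2 n (leq_trans (leq_maxr _ _) hn).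
have hp := pow_le r n (ltac:(lra)).
have e : (c + 1) * (eps / (2 * (c + 1))) = eps / 2 by field; lra.
have hc : c * r ^ n < eps / 2 by nra.
apply: (@Rle_lt_trans _ (c * r ^ n + d (u n ord0) l)); last lra.
apply: dmax_le => [|j]; first by have := dist_ge0 (u n ord0) l; nra.
by have := dist_tri (u n j) (u n ord0) l; have := hu n j; lra.
Qed.

Section Barycentric.
Variables (k : nat) (rho : R) (mu : ('I_k -> X) -> X).
Hypothesis hrho : 0 <= rho < 1.
Hypothesis hmean : is_mean mu.
Hypothesis hne : nonexpansive d mu.
Hypothesis hcontr : coord_contractive d rho mu.

Local Notation beta := (barycentric mu).

Lemma barycentric_const a : beta (fun _ => a) = (fun _ => a).
Proof. by apply: functional_extensionality => j; rewrite /barycentric hmean. Qed.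

Lemma barycentric_nonexpansive x y : dmax d (beta x) (beta y) <= dmax d x y.
Proof.
apply: dmax_le => [|j]; first exact: dmax_ge0.
apply: Rle_trans (hne _ _) _.
by apply: dmax_le => [|i]; [apply: dmax_ge0 | apply: dmax_ge].
Qed.

Lemma iter_barycentric_nonexpansive n x y :
  dmax d (iter n beta x) (iter n beta y) <= dmax d x y.
Proof.
elim: n => [|n IH] /=; first lra.
exact: Rle_trans (barycentric_nonexpansive _ _) IH.
Qed.

Lemma barycentric_coord_contractive (x y : 'I_k.+1 -> X) j :
  (forall i, i != j -> x i = y i) -> dmax d (beta x) (beta y) <= rho * d (x j) (y j).
Proof.
move=> hxy; apply: dmax_le => [|i].
  by apply: Rmult_le_pos; [lra | apply: dist_ge0].
have [->|hij] := eqVneq i j.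
  rewrite /barycentric.
  have -> : (fun l => y (lift j l)) = (fun l => x (lift j l)).
    by apply: functional_extensionality => l; rewrite hxy // eq_sym neq_lift.
  by rewrite dist_xx; apply: Rmult_le_pos; [lra | apply: dist_ge0].
have [l hl _] := unlift_some hij.
have := @hcontr (fun m => x (lift i m)) (fun m => y (lift i m)) l.
rewrite -hl; apply => m hm; apply: hxy.
by rewrite hl (inj_eq lift_inj).
Qed.

Definition adjacent_spread (x : 'I_k.+1 -> X) : R :=
  \big[Rmax/0]_(m < k) d (x (inord m)) (x (inord m.+1)).

Lemma adjacent_spread_ge0 x : 0 <= adjacent_spread x.
Proof. by apply: bigRmax_ge0 => m; apply: dist_ge0. Qed.

Lemma adjacent_spread_ge x (m : 'I_k) :
  d (x (inord m)) (x (inord m.+1)) <= adjacent_spread x.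
Proof. exact: (bigRmax_ge (fun m : 'I_k => d (x (inord m)) (x (inord m.+1)))). Qed.

Lemma barycentric_adjacent x (m : 'I_k) :
  d (beta x (inord m)) (beta x (inord m.+1)) <= rho * d (x (inord m)) (x (inord m.+1)).
Proof.
have hm : (m < k.+1)%nat by apply: leq_trans (ltn_ord m) _.
have hm1 : (m.+1 < k.+1)%nat by rewrite ltnS.
have e1 : lift (inord m) m = inord m.+1 :> 'I_k.+1.
  by apply: val_inj; rewrite /= /bump !inordK // leqnn.
have e2 : lift (inord m.+1) m = inord m :> 'I_k.+1.
  by apply: val_inj; rewrite /= /bump !inordK // ltnn.
have := @hcontr (fun i => x (lift (inord m) i)) (fun i => x (lift (inord m.+1) i)) m.
rewrite /= e1 e2 (dist_sym (x (inord m.+1))); apply => i hi.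
congr x; apply: val_inj; rewrite /= /bump !inordK //.
by move: hi; rewrite -(inj_eq val_inj) /=; case: ltngtP => // ->; rewrite eqxx.
Qed.

Lemma adjacent_spread_iter n x :
  adjacent_spread (iter n beta x) <= rho ^ n * adjacent_spread x.
Proof.
elim: n => [|n IH] /=; first lra.
have step : adjacent_spread (beta (iter n beta x)) <= rho * adjacent_spread (iter n beta x).
  apply: bigRmax_le => [|m]; first by have := adjacent_spread_ge0 (iter n beta x); nra.
  apply: Rle_trans (barycentric_adjacent _ m) _.
  by apply: Rmult_le_compat_l; [lra | apply: adjacent_spread_ge].
have := adjacent_spread_ge0 x; nra.
Qed.

Lemma dist_head_le_adjacent_spread x i :
  d (x i) (x ord0) <= INR k * adjacent_spread x.
Proof.
suff hm m : (m <= k)%nat -> d (x (inord m)) (x ord0) <= INR m * adjacent_spread x.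
  rewrite -(inord_val i); apply: Rle_trans (hm i (ltn_ord i)) _.
  by apply: Rmult_le_compat_r; [apply: adjacent_spread_ge0 | apply/le_INR/leP; rewrite -ltnS].
elim: m => [|m IH] hm.
  by rewrite (_ : inord 0 = ord0) ?dist_xx /=; [lra | apply: val_inj; rewrite /= inordK].
have := adjacent_spread_ge x (Ordinal hm); have := IH (ltnW hm).
have := dist_tri (x (inord m.+1)) (x (inord m)) (x ord0).
by rewrite S_INR (dist_sym (x (inord m.+1)) (x (inord m))) /=; lra.
Qed.

Lemma iter_barycentric_head_step x n :
  d (iter n.+1 beta x ord0) (iter n beta x ord0)
    <= INR k * adjacent_spread x * rho ^ n.
Proof.
set u := iter n beta x.
have := @hne (fun i => u (lift ord0 i)) (fun _ => u ord0); rewrite hmean => h.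
apply: Rle_trans h _; apply: dmax_le => [|i].
  have := pos_INR k; have := adjacent_spread_ge0 x; have := pow_le rho n (ltac:(lra)).
  by move=> *; apply: Rmult_le_pos; [apply: Rmult_le_pos|].
apply: Rle_trans (dist_head_le_adjacent_spread _ _) _.
have := adjacent_spread_iter n x; have := pos_INR k; rewrite -/u; nra.
Qed.

Hypothesis hcomp : complete d.

Lemma barycentric_power_convergent : power_convergent d mu.
Proof.
move=> x; set c := INR k * adjacent_spread x.
have c0 : 0 <= c by apply: Rmult_le_pos; [apply: pos_INR | apply: adjacent_spread_ge0].
have [l hl] := hcomp (cauchy_of_geometric hrho c0 (iter_barycentric_head_step x)).
exists l; apply: (tuple_converges_of_head hrho c0 hl) => n j.
apply: Rle_trans (dist_head_le_adjacent_spread _ _) _.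
have := adjacent_spread_iter n x; have := pos_INR k; rewrite /c; nra.
Qed.

Definition barycentric_limit (x : 'I_k.+1 -> X) : X :=
  proj1_sig (constructive_indefinite_description _ (barycentric_power_convergent x)).

Lemma barycentric_limit_extends : beta_extends d mu barycentric_limit.
Proof. by move=> x; rewrite /barycentric_limit; case: constructive_indefinite_description. Qed.

Lemma beta_extends_unique nu : beta_extends d mu nu -> forall x, nu x = barycentric_limit x.
Proof. by move=> hnu x; apply: tuple_limit_unique (hnu x) (barycentric_limit_extends x). Qed.

Lemma barycentric_limit_mean : is_mean barycentric_limit.
Proof.
move=> a; apply: tuple_limit_unique (barycentric_limit_extends _) _.
have iter_const n : iter n beta (fun _ => a) = (fun _ => a).
  by elim: n => //= n ->; apply: barycentric_const.
by move=> eps he; exists 0%nat => n _; rewrite iter_const dmax_xx.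
Qed.

Lemma barycentric_limit_nonexpansive : nonexpansive d barycentric_limit.
Proof.
move=> x y; apply: (tuple_limit_dist_le (N := 0) (barycentric_limit_extends x)
  (barycentric_limit_extends y)) => n _.
exact: iter_barycentric_nonexpansive.
Qed.

Lemma barycentric_limit_continuous : continuous_mean d barycentric_limit.
Proof.
move=> x eps he; exists eps; split=> // y hy.
exact: Rle_lt_trans (barycentric_limit_nonexpansive x y) hy.
Qed.

Lemma barycentric_limit_coord_contractive : coord_contractive d rho barycentric_limit.
Proof.
move=> x y j hxy; apply: (tuple_limit_dist_le (N := 1) (barycentric_limit_extends x)
  (barycentric_limit_extends y)) => -[//|n] _.
rewrite !iterSr; apply: Rle_trans (iter_barycentric_nonexpansive _ _ _) _.
exact: barycentric_coord_contractive.
Qed.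

End Barycentric.

End MetricSpace.

Theorem proposition3p13 (X : Type) (d : X -> X -> R)
  (hmet : is_metric d) (hcomp : complete d)
  (k : nat) (hk : (2 <= k)%nat) (rho : R) (hrho : 0 < rho < 1)
  (mu : ('I_k -> X) -> X)
  (hmean : is_mean mu) (hne : nonexpansive d mu) (hcontr : coord_contractive d rho mu) :
  power_convergent d mu /\
  (exists nu : ('I_k.+1 -> X) -> X,
     (is_mean nu /\ continuous_mean d nu /\ beta_extends d mu nu) /\
     (forall nu' : ('I_k.+1 -> X) -> X,
        is_mean nu' -> continuous_mean d nu' -> beta_extends d mu nu' ->
        forall x, nu' x = nu x) /\
     nonexpansive d nu /\ coord_contractive d rho nu).
Proof.
have hrho' : 0 <= rho < 1 by lra.
split; first exact (barycentric_power_convergent hmet hrho' hmean hne hcontr hcomp).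
exists (barycentric_limit hmet hrho' hmean hne hcontr hcomp).
split; [split; [|split] | split; [|split]].
- exact: barycentric_limit_mean.
- exact: barycentric_limit_continuous.
- exact: barycentric_limit_extends.
- by move=> nu' _ _; apply: beta_extends_unique.
- exact: barycentric_limit_nonexpansive.
- exact: barycentric_limit_coord_contractive.
Qed.
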